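(* Let $p,q,r\in\mathbb{Q}$ with $r\neq0$, and suppose $t^3-pt^2-qt-r$ has three distinct roots $\alpha_1,\alpha_2,\alpha_3$ with $\alpha_1\neq p$. Let $x,y,z$ be integers and $$M=\begin{pmatrix} x & rz & ry+prz\\ y & x+qz & qy+(pq+r)z\\ z & y+pz & x+py+(p^2+q)z\end{pmatrix}.$$ Suppose $|x+y\alpha_1+z\alpha_1^2|>|x+y\alpha_j+z\alpha_j^2|$ for $j=2,3$. Then for all $h,k\in\{1,2,3\}$, $$\lim_{n\to\infty}\frac{M^n_{2,2}}{M^n_{h,k}}=\bar M_{h,k},\qquad \bar M=\begin{pmatrix}\frac{\alpha_1^2(\alpha_1-p)}{r} & \frac{\alpha_1(\alpha_1-p)}{r} & \frac{\alpha_1-p}{r}\\ \alpha_1 & 1 & \frac{1}{\alpha_1}\\ \alpha_1(\alpha_1-p) & \alpha_1-p & \frac{\alpha_1-p}{\alpha_1}\end{pmatrix},$$ and $$\lim_{n\to\infty}\frac{M^n_{3,3}}{M^n_{h,k}}=\tilde M_{h,k},\qquad \tilde M=\begin{pmatrix}\frac{\alpha_1^3}{r} & \frac{\alpha_1^2}{r} & \frac{\alpha_1}{r}\\ \frac{\alpha_1^2}{\alpha_1-p} & \frac{\alpha_1}{\alpha_1-p} & \frac{1}{\alpha_1-p}\\ \alpha_1^2 & \alpha_1 & 1\end{pmatrix}.$$ (Equivalently, $\bar M_{1,1}=-\alpha_1(\alpha_2+\alpha_3)/(\alpha_2\alpha_3)$, $\tilde M_{1,1}=\alpha_1^2/(\alpha_2\alpha_3)$,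 etc., using $\alpha_1-p=-(\alpha_2+\alpha_3)$ and $r=\alpha_1\alpha_2\alpha_3$.)
   Context: $M^n_{a,b}$ denotes the $(a,b)$-entry of the $n$-th power of $M$. The matrix $M$ equals $xI+yA+zA^2$, where $A=\begin{pmatrix}0&0&r\\1&0&q\\0&1&p\end{pmatrix}$ is the companion matrix of $t^3-pt^2-qt-r$. *)

From Stdlib Require Import Reals QArith ZArith.
Open Scope R_scope.

Record Cx := mkCx { Re : R ; Im : R }.
Definition RtoC (a : R) : Cx := mkCx a 0.
Definition Cadd (u v : Cx) : Cx := mkCx (Re u + Re v) (Im u + Im v).
Definition Copp (u : Cx) : Cx := mkCx (- Re u) (- Im u).
Definition Csub (u v : Cx) : Cx := Cadd u (Copp v).
Definition Cmul (u v : Cx) : Cx :=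
  mkCx (Re u * Re v - Im u * Im v) (Re u * Im v + Im u * Re v).
Definition Cinv (u : Cx) : Cx :=
  let d := Re u * Re u + Im u * Im u in mkCx (Re u / d) (- Im u / d).
Definition Cdiv (u v : Cx) : Cx := Cmul u (Cinv v).
Definition Cnorm (u : Cx) : R := sqrt (Re u * Re u + Im u * Im u).

Definition Ccv (u : nat -> Cx) (l : Cx) : Prop :=
  forall eps : R, eps > 0 ->
    exists N : nat, forall n : nat, (n >= N)%nat -> Cnorm (Csub (u n) l) < eps.

Definition cubic (p q r : R) (t : Cx) : Cx :=
  Csub (Csub (Csub (Cmul t (Cmul t t)) (Cmul (RtoC p) (Cmul t t)))
             (Cmul (RtoC q) t)) (RtoC r).

Definition lin3 (x y z : R) (t : Cx) : Cx :=
  Cadd (Cadd (RtoC x) (Cmul (RtoC y) t)) (Cmul (RtoC z) (Cmul t t)).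

(* ---------- 3x3 real matrices, entries indexed by 1..3 ---------- *)
Definition mat3 := nat -> nat -> R.
Definition mid : mat3 := fun i j => if Nat.eqb i j then 1 else 0.
Definition mmul (A B : mat3) : mat3 :=
  fun i j => A i 1%nat * B 1%nat j + A i 2%nat * B 2%nat j + A i 3%nat * B 3%nat j.
Fixpoint mpow (A : mat3) (n : nat) : mat3 :=
  match n with
  | O => mid
  | S m => mmul (mpow A m) A
  end.

(* the matrix M of the statement (= x I + y A + z A^2, A the companion matrix) *)
Definition Mmat (p q r x y z : R) : mat3 := fun i j =>
  match i, j with
  | 1%nat, 1%nat => x
  | 1%nat, 2%nat => r * z
  | 1%nat, 3%nat => r * y + p * r * z
  | 2%nat, 1%nat => y
  | 2%nat, 2%nat => x + q * z
  | 2%nat, 3%nat => q * y + (p * q + r) * z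
  | 3%nat, 1%nat => z
  | 3%nat, 2%nat => y + p * z
  | 3%nat, 3%nat => x + p * y + (p * p + q) * z
  | _, _ => 0
  end.

Definition Mbar (p r : R) (a : Cx) : nat -> nat -> Cx := fun i j =>
  let ap := Csub a (RtoC p) in
  let rr := RtoC r in
  match i, j with
  | 1%nat, 1%nat => Cdiv (Cmul (Cmul a a) ap) rr
  | 1%nat, 2%nat => Cdiv (Cmul a ap) rr
  | 1%nat, 3%nat => Cdiv ap rr
  | 2%nat, 1%nat => a
  | 2%nat, 2%nat => RtoC 1
  | 2%nat, 3%nat => Cinv a
  | 3%nat, 1%nat => Cmul a ap
  | 3%nat, 2%nat => ap
  | 3%nat, 3%nat => Cdiv ap a
  | _, _ => RtoC 0
  end.

Definition Mtilde (p r : R) (a : Cx) : nat -> nat -> Cx := fun i j =>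
  let ap := Csub a (RtoC p) in
  let rr := RtoC r in
  match i, j with
  | 1%nat, 1%nat => Cdiv (Cmul a (Cmul a a)) rr
  | 1%nat, 2%nat => Cdiv (Cmul a a) rr
  | 1%nat, 3%nat => Cdiv a rr
  | 2%nat, 1%nat => Cdiv (Cmul a a) ap
  | 2%nat, 2%nat => Cdiv a ap
  | 2%nat, 3%nat => Cinv ap
  | 3%nat, 1%nat => Cmul a a
  | 3%nat, 2%nat => a
  | 3%nat, 3%nat => RtoC 1
  | _, _ => RtoC 0
  end.

From Pilot Require Import Defs.
From Stdlib Require Import Reals QArith ZArith Lra Lia.
From Coquelicot Require Coquelicot.
Open Scope R_scope.

(* [M = x I + y A + z A^2] is a polynomial in the companion matrix [A], so when the
   roots [a1], [a2], [a3] are distinct it is diagonalised together with [A]: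
   [M^n = sum_j l_j^n E_j] with [l_j = x + y a_j + z a_j^2] and [E_j] the rank-one
   spectral projectors.  If [|l_1|] dominates, every ratio of two entries of [M^n]
   tends to the corresponding ratio of entries of [E_1]; the denominator entry is
   nonzero because [r <> 0] and [a1 <> p], and Vieta's formulas [p = a1 + a2 + a3],
   [r = a1 a2 a3] turn these ratios into the entries of [Mbar] and [Mtilde]. *)

(* Coquelicot is only imported locally: its [C], [RtoC], [Re], [Cinv] would shadow
   the names used in the statement. *)
Module DominantRoot.
Import Coquelicot.Coquelicot.

Definition toC (u : Defs.Cx) : C := (Defs.Re u, Defs.Im u).

Lemma toC_inj u v : toC u = toC v -> u = v.
Proof. destruct u, v; unfold toC; simpl; intro E; inversion E; reflexivity. Qed.

Lemma toC_neq u v : u <> v -> toC u <> toC v.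
Proof. intros H E. apply H, toC_inj, E. Qed.

Lemma toC_mul u v : toC (Defs.Cmul u v) = (toC u * toC v)%C.
Proof. reflexivity. Qed.

Lemma toC_sub u v : toC (Defs.Csub u v) = (toC u - toC v)%C.
Proof. reflexivity. Qed.

Lemma toC_RtoC a : toC (Defs.RtoC a) = RtoC a.
Proof. reflexivity. Qed.

Lemma toC_inv u : toC (Defs.Cinv u) = Cinv (toC u).
Proof.
  destruct u as [a b]; unfold toC, Defs.Cinv, Cinv; simpl.
  replace (a * (a * 1) + b * (b * 1)) with (a * a + b * b) by ring.
  reflexivity.
Qed.

Lemma toC_div u v : toC (Defs.Cdiv u v) = (toC u / toC v)%C.
Proof. unfold Defs.Cdiv. rewrite toC_mul, toC_inv. reflexivity. Qed.

Lemma Cnorm_Cmod u : Defs.Cnorm u = Cmod (toC u).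
Proof. destruct u as [a b]; unfold Defs.Cnorm, Cmod, toC; simpl. f_equal; ring. Qed.

Lemma toC_cubic P Q R t : toC (Defs.cubic P Q R t) =
  (toC t * (toC t * toC t) - RtoC P * (toC t * toC t) - RtoC Q * toC t - RtoC R)%C.
Proof. reflexivity. Qed.

Lemma Cinv_C0 : Cinv (RtoC 0) = RtoC 0.
Proof. apply injective_projections; simpl; unfold Rdiv; ring. Qed.

Lemma RtoC_Rdiv (a b : R) : RtoC (a / b) = (RtoC a / RtoC b)%C.
Proof.
  destruct (Req_dec b 0) as [-> | Hb].
  - unfold Rdiv, Cdiv. rewrite Rinv_0, Rmult_0_r, Cinv_C0. ring.
  - unfold Rdiv, Cdiv. rewrite RtoC_mult, RtoC_inv by exact Hb. reflexivity.
Qed.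

Open Scope C_scope.

Lemma Cmult_eq0_r (x y : C) : x * y = 0 -> x <> 0 -> y = 0.
Proof. intros H Hx. replace y with (/ x * (x * y)) by (field; exact Hx). rewrite H. ring. Qed.

Lemma vieta3 (a1 a2 a3 p q r : C) :
  a1 <> a2 -> a1 <> a3 -> a2 <> a3 ->
  a1 * (a1 * a1) - p * (a1 * a1) - q * a1 - r = 0 ->
  a2 * (a2 * a2) - p * (a2 * a2) - q * a2 - r = 0 ->
  a3 * (a3 * a3) - p * (a3 * a3) - q * a3 - r = 0 ->
  p = a1 + a2 + a3 /\ q = - (a1 * a2 + a1 * a3 + a2 * a3) /\ r = a1 * a2 * a3.
Proof.
  intros d12 d13 d23 c1 c2 c3.
  apply Cminus_eq_contra in d12; apply Cminus_eq_contra in d13; apply Cminus_eq_contra in d23.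
  assert (Hp : p = a1 + a2 + a3).
  { (* the second divided difference of the cubic at a1, a2, a3 is a1 + a2 + a3 - p *)
    assert (E : (a1 - a2) * (a1 - a3) * (a2 - a3) * (a1 + a2 + a3 - p) = 0).
    { transitivity ((a2 - a3) * (a1 * (a1 * a1) - p * (a1 * a1) - q * a1 - r)
        - (a1 - a3) * (a2 * (a2 * a2) - p * (a2 * a2) - q * a2 - r)
        + (a1 - a2) * (a3 * (a3 * a3) - p * (a3 * a3) - q * a3 - r)).
      - ring.
      - rewrite c1, c2, c3. ring. }
    apply Cmult_eq0_r in E; [| repeat apply Cmult_neq_0; assumption].
    replace p with (a1 + a2 + a3 - (a1 + a2 + a3 - p)) by ring. rewrite E. ring. }
  subst p.
  assert (Hq : q = - (a1 * a2 + a1 * a3 + a2 * a3)).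
  { assert (E : (a1 - a2) * (- (a1 * a2 + a1 * a3 + a2 * a3) - q) = 0).
    { transitivity ((a1 * (a1 * a1) - (a1 + a2 + a3) * (a1 * a1) - q * a1 - r)
        - (a2 * (a2 * a2) - (a1 + a2 + a3) * (a2 * a2) - q * a2 - r)).
      - ring.
      - rewrite c1, c2. ring. }
    apply Cmult_eq0_r in E; [| assumption].
    replace q with (- (a1 * a2 + a1 * a3 + a2 * a3)
                    - (- (a1 * a2 + a1 * a3 + a2 * a3) - q)) by ring.
    rewrite E. ring. }
  subst q. repeat split.
  replace r with (r + (a1 * (a1 * a1) - (a1 + a2 + a3) * (a1 * a1)
                  - - (a1 * a2 + a1 * a3 + a2 * a3) * a1 - r)) by (rewrite c1; ring).
  ring.
Qed.

(** * The spectral decomposition of [M] *)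

Definition eigval (X Y Z : R) (a : C) : C := RtoC X + RtoC Y * a + RtoC Z * (a * a).

Lemma toC_lin3 X Y Z t : toC (Defs.lin3 X Y Z t) = eigval X Y Z (toC t).
Proof. reflexivity. Qed.

(* For a root [a], [(1, a, a^2)] is a left eigenvector of the companion matrix, and
   [(b c, -(b + c), 1)] is a right eigenvector for [a] when [b], [c] are the other two
   roots; their pairing is [(a - b) (a - c)], so [proj a b c] is the projector onto the
   [a]-eigenline. *)
Definition eigvec_l (a : C) (k : nat) : C :=
  match k with 1%nat => 1 | 2%nat => a | _ => a * a end.

Definition eigvec_r (b c : C) (h : nat) : C :=
  match h with 1%nat => b * c | 2%nat => - (b + c) | _ => 1 end.

Definition proj (a b c : C) (h k : nat) : C :=
  eigvec_r b c h * eigvec_l a k / ((a - b) * (a - c)).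

Arguments eigvec_l a k%_nat_scope.
Arguments eigvec_r b c h%_nat_scope.
Arguments proj a b c h%_nat_scope k%_nat_scope.

Lemma eigvec_l_Mmat (P Q Rr X Y Z : R) (a : C) (k : nat) :
  a * (a * a) - RtoC P * (a * a) - RtoC Q * a - RtoC Rr = 0 -> (1 <= k <= 3)%nat ->
  eigvec_l a 1 * RtoC (Mmat P Q Rr X Y Z 1%nat k)
  + eigvec_l a 2 * RtoC (Mmat P Q Rr X Y Z 2%nat k)
  + eigvec_l a 3 * RtoC (Mmat P Q Rr X Y Z 3%nat k) = eigval X Y Z a * eigvec_l a k.
Proof.
  intros Ha Hk.
  destruct k as [|[|[|[|k]]]]; try lia; cbn [eigvec_l Mmat]; unfold eigval;
    repeat rewrite ?RtoC_plus, ?RtoC_mult.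
  - ring.
  - transitivity (eigval X Y Z a * a
        - RtoC Z * (a * (a * a) - RtoC P * (a * a) - RtoC Q * a - RtoC Rr));
      [unfold eigval; ring | rewrite Ha; unfold eigval; ring].
  - transitivity (eigval X Y Z a * (a * a) - (RtoC Y + RtoC Z * (a + RtoC P))
        * (a * (a * a) - RtoC P * (a * a) - RtoC Q * a - RtoC Rr));
      [unfold eigval; ring | rewrite Ha; unfold eigval; ring].
Qed.

Lemma proj_Mmat (P Q Rr X Y Z : R) (a b c : C) (h k : nat) :
  a * (a * a) - RtoC P * (a * a) - RtoC Q * a - RtoC Rr = 0 -> (1 <= k <= 3)%nat ->
  proj a b c h 1 * RtoC (Mmat P Q Rr X Y Z 1%nat k)
  + proj a b c h 2 * RtoC (Mmat P Q Rr X Y Z 2%nat k)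
  + proj a b c h 3 * RtoC (Mmat P Q Rr X Y Z 3%nat k) = eigval X Y Z a * proj a b c h k.
Proof.
  intros Ha Hk. unfold proj.
  transitivity (eigvec_r b c h / ((a - b) * (a - c))
    * (eigvec_l a 1 * RtoC (Mmat P Q Rr X Y Z 1%nat k)
       + eigvec_l a 2 * RtoC (Mmat P Q Rr X Y Z 2%nat k)
       + eigvec_l a 3 * RtoC (Mmat P Q Rr X Y Z 3%nat k))).
  - unfold Cdiv. ring.
  - rewrite (eigvec_l_Mmat P Q Rr X Y Z a k Ha Hk). unfold Cdiv. ring.
Qed.

Lemma proj_sum_mid (a1 a2 a3 : C) (h k : nat) :
  a1 <> a2 -> a1 <> a3 -> a2 <> a3 -> (1 <= h <= 3)%nat -> (1 <= k <= 3)%nat ->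
  proj a1 a2 a3 h k + proj a2 a1 a3 h k + proj a3 a1 a2 h k = RtoC (mid h k).
Proof.
  intros d12 d13 d23 Hh Hk.
  pose proof (Cminus_eq_contra _ _ d12); pose proof (Cminus_eq_contra _ _ (not_eq_sym d12)).
  pose proof (Cminus_eq_contra _ _ d13); pose proof (Cminus_eq_contra _ _ (not_eq_sym d13)).
  pose proof (Cminus_eq_contra _ _ d23); pose proof (Cminus_eq_contra _ _ (not_eq_sym d23)).
  unfold proj, mid.
  destruct h as [|[|[|[|h]]]]; try lia; destruct k as [|[|[|[|k]]]]; try lia;
    cbn [Nat.eqb eigvec_l eigvec_r]; field; repeat split; assumption.
Qed.

Lemma mpow_Mmat_spectral (P Q Rr X Y Z : R) (a1 a2 a3 : C) :
  a1 <> a2 -> a1 <> a3 -> a2 <> a3 ->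
  a1 * (a1 * a1) - RtoC P * (a1 * a1) - RtoC Q * a1 - RtoC Rr = 0 ->
  a2 * (a2 * a2) - RtoC P * (a2 * a2) - RtoC Q * a2 - RtoC Rr = 0 ->
  a3 * (a3 * a3) - RtoC P * (a3 * a3) - RtoC Q * a3 - RtoC Rr = 0 ->
  forall n h k, (1 <= h <= 3)%nat -> (1 <= k <= 3)%nat ->
  RtoC (mpow (Mmat P Q Rr X Y Z) n h k) =
    eigval X Y Z a1 ^ n * proj a1 a2 a3 h k + eigval X Y Z a2 ^ n * proj a2 a1 a3 h k
    + eigval X Y Z a3 ^ n * proj a3 a1 a2 h k.
Proof.
  intros d12 d13 d23 c1 c2 c3 n.
  induction n as [|n IH]; intros h k Hh Hk.
  - cbn [mpow Cpow]. rewrite <- (proj_sum_mid a1 a2 a3 h k) by assumption. ring.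
  - cbn [mpow]. unfold mmul.
    rewrite !RtoC_plus, !RtoC_mult, !IH by lia.
    transitivity (eigval X Y Z a1 ^ n * (eigval X Y Z a1 * proj a1 a2 a3 h k)
      + eigval X Y Z a2 ^ n * (eigval X Y Z a2 * proj a2 a1 a3 h k)
      + eigval X Y Z a3 ^ n * (eigval X Y Z a3 * proj a3 a1 a2 h k)).
    + rewrite <- (proj_Mmat P Q Rr X Y Z a1 a2 a3 h k c1 Hk),
        <- (proj_Mmat P Q Rr X Y Z a2 a1 a3 h k c2 Hk),
        <- (proj_Mmat P Q Rr X Y Z a3 a1 a2 h k c3 Hk).
      ring.
    + cbn [Cpow]. ring.
Qed.

(** * Convergence of complex sequences *)

Definition cvC (u : nat -> C) (l : C) : Prop :=
  forall eps : R, (0 < eps)%R ->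
    exists N : nat, forall n, (N <= n)%nat -> (Cmod (u n - l) < eps)%R.

Lemma cvC_ext (u v : nat -> C) (l : C) : (forall n, u n = v n) -> cvC u l -> cvC v l.
Proof.
  intros E H eps Heps. destruct (H eps Heps) as [N HN].
  exists N. intros n Hn. rewrite <- E. exact (HN n Hn).
Qed.

Lemma cvC_const (l : C) : cvC (fun _ => l) l.
Proof.
  intros eps Heps. exists O. intros n _.
  replace (l - l) with (RtoC 0) by ring. rewrite Cmod_0. exact Heps.
Qed.

Lemma cvC_plus (u v : nat -> C) (l m : C) :
  cvC u l -> cvC v m -> cvC (fun n => u n + v n) (l + m).
Proof.
  intros Hu Hv eps Heps.
  destruct (Hu (eps / 2)%R) as [N1 H1]; [lra |].
  destruct (Hv (eps / 2)%R) as [N2 H2]; [lra |].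
  exists (Nat.max N1 N2). intros n Hn.
  replace (u n + v n - (l + m)) with ((u n - l) + (v n - m)) by ring.
  eapply Rle_lt_trans; [apply Cmod_triangle |].
  specialize (H1 n ltac:(lia)). specialize (H2 n ltac:(lia)). lra.
Qed.

Lemma cvC_geom (rho E : C) : (Cmod rho < 1)%R -> cvC (fun n => rho ^ n * E) 0.
Proof.
  intros Hrho eps Heps.
  pose proof (Cmod_ge_0 E) as HE; pose proof (Cmod_ge_0 rho) as Hr.
  destruct (pow_lt_1_zero (Cmod rho)) with (y := (eps / (Cmod E + 1))%R) as [N HN].
  - rewrite Rabs_pos_eq; assumption.
  - apply Rdiv_lt_0_compat; lra.
  - exists N. intros n Hn. specialize (HN n Hn).
    assert (Hp : (0 <= Cmod rho ^ n)%R) by (apply pow_le; assumption).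
    rewrite Rabs_pos_eq in HN by exact Hp.
    apply Rlt_div_r in HN; [| lra].
    replace (rho ^ n * E - 0) with (rho ^ n * E) by ring.
    rewrite Cmod_mult, Cmod_pow. nra.
Qed.

Lemma cvC_Cmod_lower (v : nat -> C) (B : C) :
  cvC v B -> B <> 0 -> exists N, forall n, (N <= n)%nat -> (Cmod B / 2 < Cmod (v n))%R.
Proof.
  intros Hv HB.
  assert (Hb : (0 < Cmod B)%R) by (apply Cmod_gt_0; exact HB).
  destruct (Hv (Cmod B / 2)%R) as [N HN]; [lra |].
  exists N. intros n Hn. specialize (HN n Hn).
  pose proof (Cmod_triangle (v n) (B - v n)) as T.
  replace (v n + (B - v n)) with B in T by ring.
  replace (B - v n) with (- (v n - B)) in T by ring. rewrite Cmod_opp in T. lra.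
Qed.

Lemma cvC_div (u v : nat -> C) (A B : C) :
  cvC u A -> cvC v B -> B <> 0 -> cvC (fun n => u n / v n) (A / B).
Proof.
  intros Hu Hv HB eps Heps.
  assert (Hb : (0 < Cmod B)%R) by (apply Cmod_gt_0; exact HB).
  destruct (cvC_Cmod_lower v B Hv HB) as [N1 H1].
  set (b := Cmod B) in *. set (k := Cmod (A / B)).
  assert (Hk : (0 <= k)%R) by apply Cmod_ge_0.
  destruct (Hu (eps * b / 4)%R) as [N2 H2]; [nra |].
  destruct (Hv (eps * b / (4 * (k + 1)))%R) as [N3 H3].
  { apply Rdiv_lt_0_compat; nra. }
  exists (Nat.max N1 (Nat.max N2 N3)). intros n Hn.
  specialize (H1 n ltac:(lia)). specialize (H2 n ltac:(lia)). specialize (H3 n ltac:(lia)).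
  assert (Hvn : v n <> 0) by (intros E; rewrite E, Cmod_0 in H1; lra).
  replace (u n / v n - A / B) with (((u n - A) - (A / B) * (v n - B)) / v n)
    by (field; split; assumption).
  rewrite Cmod_div by exact Hvn.
  assert (Hnum : (Cmod ((u n - A) - (A / B) * (v n - B))
                  <= Cmod (u n - A) + k * Cmod (v n - B))%R).
  { unfold Cminus at 1. eapply Rle_trans; [apply Cmod_triangle |].
    rewrite Cmod_opp, Cmod_mult. apply Rle_refl. }
  pose proof (Cmod_ge_0 (v n - B)).
  apply Rlt_div_r in H3; [| lra].
  apply Rlt_div_l; [lra |].
  assert (eps * b / 2 < eps * Cmod (v n))%R by nra.
  nra.
Qed.

Lemma Cdiv_mult_cancel_l (c u v : C) : c <> 0 -> (c * u) / (c * v) = u / v.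
Proof.
  intro Hc. destruct (Req_dec (Cmod v) 0) as [Hv | Hv].
  - apply Cmod_eq_0 in Hv. subst v.
    replace (c * 0) with (RtoC 0) by ring. unfold Cdiv. rewrite Cinv_C0. ring.
  - field. split; [| exact Hc]. intros ->. apply Hv, Cmod_0.
Qed.

Lemma Cmod_div_lt1 (a b : C) : (Cmod a < Cmod b)%R -> (Cmod (a / b) < 1)%R.
Proof.
  intros H.
  assert (Hb : b <> 0) by (intros ->; rewrite Cmod_0 in H; pose proof (Cmod_ge_0 a); lra).
  rewrite Cmod_div by exact Hb.
  apply (Rdiv_lt_1 _ _ (proj1 (Cmod_gt_0 b) Hb)), H.
Qed.

Lemma cvC_dominant_ratio (L1 L2 L3 A1 A2 A3 B1 B2 B3 : C) :
  (Cmod L2 < Cmod L1)%R -> (Cmod L3 < Cmod L1)%R -> B1 <> 0 ->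
  cvC (fun n => (L1 ^ n * A1 + L2 ^ n * A2 + L3 ^ n * A3)
              / (L1 ^ n * B1 + L2 ^ n * B2 + L3 ^ n * B3)) (A1 / B1).
Proof.
  intros H2 H3 HB.
  assert (HL : L1 <> 0).
  { intros ->. rewrite Cmod_0 in H2. pose proof (Cmod_ge_0 L2). lra. }
  set (r2 := L2 / L1). set (r3 := L3 / L1).
  assert (E2 : L2 = L1 * r2) by (unfold r2; field; exact HL).
  assert (E3 : L3 = L1 * r3) by (unfold r3; field; exact HL).
  apply cvC_ext with
    (u := fun n => (A1 + r2 ^ n * A2 + r3 ^ n * A3) / (B1 + r2 ^ n * B2 + r3 ^ n * B3)).
  { intro n. rewrite E2, E3, !Cpow_mult_l.
    rewrite <- (Cdiv_mult_cancel_l (L1 ^ n)) by (apply Cpow_nz; exact HL).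
    f_equal; ring. }
  replace (A1 / B1) with ((A1 + 0 + 0) / (B1 + 0 + 0)) by (f_equal; ring).
  apply cvC_div; [| | replace (B1 + 0 + 0) with B1 by ring; exact HB];
    repeat apply cvC_plus;
    solve [apply cvC_const | apply cvC_geom, Cmod_div_lt1; assumption].
Qed.

Lemma cvC_mpow_ratio (P Q Rr X Y Z : R) (a1 a2 a3 : C) (h0 k0 h k : nat) :
  a1 <> a2 -> a1 <> a3 -> a2 <> a3 ->
  a1 * (a1 * a1) - RtoC P * (a1 * a1) - RtoC Q * a1 - RtoC Rr = 0 ->
  a2 * (a2 * a2) - RtoC P * (a2 * a2) - RtoC Q * a2 - RtoC Rr = 0 ->
  a3 * (a3 * a3) - RtoC P * (a3 * a3) - RtoC Q * a3 - RtoC Rr = 0 ->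
  (Cmod (eigval X Y Z a2) < Cmod (eigval X Y Z a1))%R ->
  (Cmod (eigval X Y Z a3) < Cmod (eigval X Y Z a1))%R ->
  (1 <= h0 <= 3)%nat -> (1 <= k0 <= 3)%nat -> (1 <= h <= 3)%nat -> (1 <= k <= 3)%nat ->
  proj a1 a2 a3 h k <> 0 ->
  cvC (fun n => RtoC (mpow (Mmat P Q Rr X Y Z) n h0 k0 / mpow (Mmat P Q Rr X Y Z) n h k))
      (proj a1 a2 a3 h0 k0 / proj a1 a2 a3 h k).
Proof.
  intros d12 d13 d23 c1 c2 c3 dom2 dom3 Hh0 Hk0 Hh Hk Hproj.
  eapply cvC_ext; [| apply (cvC_dominant_ratio _ _ _ (proj a1 a2 a3 h0 k0)
    (proj a2 a1 a3 h0 k0) (proj a3 a1 a2 h0 k0) _ (proj a2 a1 a3 h k) (proj a3 a1 a2 h k)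
    dom2 dom3 Hproj)].
  intro n. cbv beta.
  rewrite RtoC_Rdiv, !(mpow_Mmat_spectral P Q Rr X Y Z a1 a2 a3) by assumption.
  reflexivity.
Qed.

Lemma vieta_nonzero (P Rr : R) (a1 a2 a3 : C) :
  RtoC P = a1 + a2 + a3 -> RtoC Rr = a1 * a2 * a3 -> Rr <> 0%R -> a1 <> RtoC P ->
  a1 <> 0 /\ a2 <> 0 /\ a3 <> 0 /\ a2 + a3 <> 0.
Proof.
  intros HP HRr Hr Hp.
  assert (Hprod : a1 * a2 * a3 <> 0).
  { rewrite <- HRr. intros E. apply Hr. apply (f_equal Re) in E. exact E. }
  repeat split; try (intros E; apply Hprod; rewrite E; ring).
  intros E. apply Hp. rewrite HP.
  replace (a1 + a2 + a3) with (a1 + (a2 + a3)) by ring. rewrite E. ring.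
Qed.

Section LimitEntries.

Variables (a : Defs.Cx) (b c : C) (P Rr : R).
Hypotheses (Hab : toC a <> b) (Hac : toC a <> c)
  (Ha0 : toC a <> 0) (Hb0 : b <> 0) (Hc0 : c <> 0) (Hbc : b + c <> 0)
  (HP : RtoC P = toC a + b + c) (HRr : RtoC Rr = toC a * b * c).

Lemma proj_neq0 (h k : nat) : (1 <= h <= 3)%nat -> (1 <= k <= 3)%nat -> proj (toC a) b c h k <> 0.
Proof.
  intros Hh Hk E.
  pose proof (Cminus_eq_contra _ _ Hab); pose proof (Cminus_eq_contra _ _ Hac).
  assert (Hr : eigvec_r b c h <> 0).
  { destruct h as [|[|[|[|h]]]]; try lia; cbn [eigvec_r].
    - apply Cmult_neq_0; assumption.
    - intros E'. apply Hbc. replace (b + c) with (- - (b + c)) by ring. rewrite E'. ring.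
    - exact C1_nz. }
  assert (Hl : eigvec_l (toC a) k <> 0).
  { destruct k as [|[|[|[|k]]]]; try lia; cbn [eigvec_l].
    - exact C1_nz.
    - exact Ha0.
    - apply Cmult_neq_0; assumption. }
  apply (Cmult_neq_0 _ _ Hr Hl).
  replace (eigvec_r b c h * eigvec_l (toC a) k)
    with (proj (toC a) b c h k * ((toC a - b) * (toC a - c)))
    by (unfold proj; field; split; assumption).
  rewrite E. ring.
Qed.

Lemma Mbar_proj_ratio (h k : nat) : (1 <= h <= 3)%nat -> (1 <= k <= 3)%nat ->
  toC (Defs.Mbar P Rr a h k) = proj (toC a) b c 2 2 / proj (toC a) b c h k.
Proof.
  intros Hh Hk. pose proof (Cminus_eq_contra _ _ Hab); pose proof (Cminus_eq_contra _ _ Hac).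
  unfold Defs.Mbar, proj.
  destruct h as [|[|[|[|h]]]]; try lia; destruct k as [|[|[|[|k]]]]; try lia;
    repeat rewrite ?toC_div, ?toC_mul, ?toC_sub, ?toC_inv, ?toC_RtoC; rewrite ?HP, ?HRr;
    cbn [eigvec_r eigvec_l]; field; repeat split; assumption.
Qed.

Lemma Mtilde_proj_ratio (h k : nat) : (1 <= h <= 3)%nat -> (1 <= k <= 3)%nat ->
  toC (Defs.Mtilde P Rr a h k) = proj (toC a) b c 3 3 / proj (toC a) b c h k.
Proof.
  intros Hh Hk. pose proof (Cminus_eq_contra _ _ Hab); pose proof (Cminus_eq_contra _ _ Hac).
  assert (toC a - (toC a + b + c) <> 0).
  { intros E. apply Hbc. replace (b + c) with (- (toC a - (toC a + b + c))) by ring.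
    rewrite E. ring. }
  unfold Defs.Mtilde, proj.
  destruct h as [|[|[|[|h]]]]; try lia; destruct k as [|[|[|[|k]]]]; try lia;
    repeat rewrite ?toC_div, ?toC_mul, ?toC_sub, ?toC_inv, ?toC_RtoC; rewrite ?HP, ?HRr;
    cbn [eigvec_r eigvec_l]; field; repeat split; assumption.
Qed.

End LimitEntries.

Lemma Ccv_of_cvC (u : nat -> Defs.Cx) (l : Defs.Cx) :
  cvC (fun n => toC (u n)) (toC l) -> Defs.Ccv u l.
Proof.
  intros H eps Heps. destruct (H eps Heps) as [N HN].
  exists N. intros n Hn. rewrite Cnorm_Cmod, toC_sub. exact (HN n Hn).
Qed.

End DominantRoot.

Import DominantRoot.

Theorem mainTheorem4 (p q r : Q) (a1 a2 a3 : Cx) (x y z : Z) :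
  Q2R r <> 0 ->
  cubic (Q2R p) (Q2R q) (Q2R r) a1 = RtoC 0 ->
  cubic (Q2R p) (Q2R q) (Q2R r) a2 = RtoC 0 ->
  cubic (Q2R p) (Q2R q) (Q2R r) a3 = RtoC 0 ->
  a1 <> a2 -> a1 <> a3 -> a2 <> a3 ->
  a1 <> RtoC (Q2R p) ->
  Cnorm (lin3 (IZR x) (IZR y) (IZR z) a1) > Cnorm (lin3 (IZR x) (IZR y) (IZR z) a2) ->
  Cnorm (lin3 (IZR x) (IZR y) (IZR z) a1) > Cnorm (lin3 (IZR x) (IZR y) (IZR z) a3) ->
  forall h k : nat, (1 <= h <= 3)%nat -> (1 <= k <= 3)%nat ->
    Ccv (fun n => RtoC (mpow (Mmat (Q2R p) (Q2R q) (Q2R r) (IZR x) (IZR y) (IZR z)) n 2%nat 2%nat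
                      / mpow (Mmat (Q2R p) (Q2R q) (Q2R r) (IZR x) (IZR y) (IZR z)) n h k))
        (Mbar (Q2R p) (Q2R r) a1 h k)
    /\
    Ccv (fun n => RtoC (mpow (Mmat (Q2R p) (Q2R q) (Q2R r) (IZR x) (IZR y) (IZR z)) n 3%nat 3%nat
                      / mpow (Mmat (Q2R p) (Q2R q) (Q2R r) (IZR x) (IZR y) (IZR z)) n h k))
        (Mtilde (Q2R p) (Q2R r) a1 h k).
Proof.
  intros Hr c1 c2 c3 d12 d13 d23 Hp dom2 dom3 h k Hh Hk.
  apply (f_equal toC) in c1, c2, c3. rewrite toC_cubic, toC_RtoC in c1, c2, c3.
  rewrite !Cnorm_Cmod, !toC_lin3 in dom2, dom3.
  pose proof (toC_neq _ _ d12) as e12; pose proof (toC_neq _ _ d13) as e13;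
    pose proof (toC_neq _ _ d23) as e23.
  destruct (vieta3 _ _ _ _ _ _ e12 e13 e23 c1 c2 c3) as [HP [_ HRr]].
  destruct (vieta_nonzero _ _ _ _ _ HP HRr Hr (toC_neq _ _ Hp)) as [n1 [n2 [n3 Hsum]]].
  split; apply Ccv_of_cvC;
    [ rewrite (Mbar_proj_ratio a1 (toC a2) (toC a3))
    | rewrite (Mtilde_proj_ratio a1 (toC a2) (toC a3)) ]; try assumption;
    apply (cvC_mpow_ratio _ _ _ _ _ _ _ _ _ _ _ _ _ e12 e13 e23 c1 c2 c3 dom2 dom3);
    try lia; apply proj_neq0; assumption.
Qed.
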